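(* Let $n\ge 2$ and let $\mathbb{A}=(A_{ij})_{i,j=1}^n$ be an operator matrix as described in the context. Let $T=(T_1,\ldots,T_{n-1}):\mathcal{D}(T_1)\times\cdots\times\mathcal{D}(T_{n-1})\to X_n$, $T(x_1,\dots,x_{n-1})=\sum_j T_jx_j$, where each $T_j:\mathcal{D}(T_j)\subset X_j\to X_n$ is linear and relatively $A_{jj}$-bounded. Assume moreover that $\mathbb{A}_k$ is closed for $k=2,\ldots,n$. If $\sigma(A_{kk})\cup\sigma(\mathbb{A}_k)\ne\mathbb{C}$ for all $k\in\{2,\ldots,n-2\}$, then $T(\lambda-\mathbb{A}_{n-1})^{-1}$ is bounded for every $\lambda\notin\sigma(A_{n-1,n-1})\cup\sigma(\mathbb{A}_{n-1})$. In particular, $T$ is relatively $\mathbb{A}_{n-1}$-bounded if $\sigma(A_{kk})\cup\sigma(\mathbb{A}_k)\ne\mathbb{C}$ for all $k\in\{2,\ldots,n-1\}$.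
   Context: Let $X_1,\ldots,X_n$ be complex Banach spaces and $X=X_1\times\cdots\times X_n$ with norm $\|x\|=\sum_i\|x_i\|_{X_i}$. For $i,j\in\{1,\ldots,n\}$, $A_{ij}:\mathcal{D}(A_{ij})\subset X_j\to X_i$ are linear operators with $A_{ii}$ closed and, for $i\ne j$, $A_{ij}$ relatively $A_{jj}$-bounded (i.e. $\mathcal{D}(A_{jj})\subset\mathcal{D}(A_{ij})$ and there are $\alpha,\beta\ge0$ with $\|A_{ij}x\|\le\alpha\|x\|+\beta\|A_{jj}x\|$ for $x\in\mathcal{D}(A_{jj})$). The operator matrix $\mathbb{A}=(A_{ij})$ acts on $\mathcal{D}(\mathbb{A})=\mathcal{D}(A_{11})\times\cdots\times\mathcal{D}(A_{nn})$ by $(\mathbb{A}x)_i=\sum_jA_{ij}x_j$. For $1\le k\le n$, $\mathbb{A}_k:=(A_{ij})_{i,j=1}^k$ is the upper-left block acting on $X_1\times\cdots\times X_k$ with domain $\mathcal{D}(A_{11})\times\cdots\times\mathcal{D}(A_{kk})$. For a linear operator $S$ on a Banach space $Y$, $\sigma(S)$ is the set of $\lambda$ for which $\lambda-S:\mathcal{D}(S)\to Y$ is not bijective with bounded inverse. Relative boundedness of an operator with respect to a (block) operator is defined analogously. *)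

From HB Require Import structures.
From mathcomp Require Import all_boot all_order all_algebra.
From mathcomp Require Import all_classical all_reals all_analysis.
From mathcomp Require Import complex.
Set Implicit Arguments. Unset Strict Implicit. Unset Printing Implicit Defensive.
Import Order.TTheory GRing.Theory Num.Theory.
Import numFieldNormedType.Exports.
Local Open Scope classical_set_scope.
Local Open Scope ring_scope.

(* Norms take values in C (as mathcomp-analysis norms on normedModType C do);
   they are real nonnegative, and the order on C restricted to reals is the
   usual one. *)

(* A "normed space skeleton": carrier with subtraction, scalar multiplication
   and norm.  Used uniformly for a single Banach space X_i and for the
   products X_1 x ... x X_k with the sum norm. *)
Record nspace (R : realType) := NSpace {
  ncar :> Type;
  nsub : ncar -> ncar -> ncar;
  nscale : R[i] -> ncar -> ncar;
  nnorm : ncar -> R[i] }.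

(* A (possibly unbounded) operator: a domain and an action (values outside
   the domain are irrelevant). *)
Record op (U V : Type) := Op { dom : set U; app : U -> V }.

Definition tends_to0 (R : realType) (f : nat -> R[i]) : Prop :=
  forall e : R[i], 0 < e -> exists N : nat, forall m : nat, (N <= m)%N -> f m < e.

Definition closed_op (R : realType) (U V : nspace R) (A : op U V) : Prop :=
  forall (u : nat -> U) (x : U) (y : V),
    (forall m, dom A (u m)) ->
    tends_to0 (fun m => nnorm (nsub (u m) x)) ->
    tends_to0 (fun m => nnorm (nsub (app A (u m)) y)) ->
    dom A x /\ app A x = y.

Definition rel_bounded (R : realType) (U V W : nspace R)
    (A : op U V) (B : op U W) : Prop :=
  dom A `<=` dom B /\
  exists a b : R[i], 0 <= a /\ 0 <= b /\
    forall x, dom A x -> nnorm (app B x) <= a * nnorm x + b * nnorm (app A x).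

Definition is_bdd_inverse (R : realType) (U : nspace R) (A : op U U)
    (l : R[i]) (Rv : U -> U) : Prop :=
  (forall y, dom A (Rv y) /\ nsub (nscale l (Rv y)) (app A (Rv y)) = y) /\
  (forall x, dom A x -> Rv (nsub (nscale l x) (app A x)) = x) /\
  (exists c : R[i], forall y, nnorm (Rv y) <= c * nnorm y).

Definition in_resolvent (R : realType) (U : nspace R) (A : op U U)
    (l : R[i]) : Prop :=
  exists Rv : U -> U, is_bdd_inverse A l Rv.

Definition spectrum (R : realType) (U : nspace R) (A : op U U) : set R[i] :=
  [set l | ~ in_resolvent A l].

Definition lin_op (R : realType) (X Y : normedModType R[i]) (A : op X Y) : Prop :=
  dom A 0 /\
  (forall x y, dom A x -> dom A y -> dom A (x + y)) /\
  (forall (c : R[i]) x, dom A x -> dom A (c *: x)) /\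
  (forall (c : R[i]) x y, dom A x -> dom A y ->
     app A (c *: x + y) = c *: app A x + app A y).

Definition nsp_of (R : realType) (X : normedModType R[i]) : nspace R :=
  @NSpace R X (fun a b => a - b) (fun c x => c *: x) (fun x => `|x|).

(* X_0 x ... x X_{k-1} with norm ||x|| = sum_i ||x_i|| (0-based indices). *)
Definition blk (R : realType) (X : nat -> normedModType R[i]) (k : nat) : nspace R :=
  @NSpace R (forall i : 'I_k, X i)
    (fun a b i => a i - b i) (fun c a i => c *: a i)
    (fun a => \sum_(i < k) `|a i|).

Definition blockop (R : realType) (X : nat -> normedModType R[i])
    (A : forall i j : nat, op (X j) (X i)) (k : nat) : op (blk X k) (blk X k) :=
  @Op (blk X k) (blk X k)
    [set x | forall i : 'I_k, dom (A i i) (x i)]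
    (fun x i => \sum_(j < k) app (A i j) (x j)).

Definition rowop (R : realType) (X : nat -> normedModType R[i])
    (Y : normedModType R[i]) (T : forall j : nat, op (X j) Y) (m : nat)
    : op (blk X m) (nsp_of Y) :=
  @Op (blk X m) (nsp_of Y)
    [set x | forall j : 'I_m, dom (T j) (x j)]
    (fun x => \sum_(j < m) app (T j) (x j)).

(* Let Res be a bounded inverse of l - A_{n-1}.  For each pair (i, j) the map
   x |-> A_jj (Res e_i x)_j, where e_i injects X_i into the block space, is
   everywhere defined, linear and closed (A_jj is closed and Res is bounded),
   hence bounded by the closed graph theorem; the latter is proved here by a
   nested-ball argument because mathcomp-analysis states Baire's theorem only
   over real scalars.  Summing over i bounds A_jj (Res y)_j by ||y||, and the
   relative A_jj-boundedness of T_j then bounds T Res.  For the second claim pick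
   mu in the resolvent set of A_{n-1} and write T x = T Res(mu) (mu - A_{n-1}) x. *)

From HB Require Import structures.
From mathcomp Require Import all_boot all_order all_algebra.
From mathcomp Require Import all_classical all_reals all_analysis.
From mathcomp Require Import complex.
From mathcomp Require Import ring lra.
Set Implicit Arguments. Unset Strict Implicit. Unset Printing Implicit Defensive.
Import Order.TTheory GRing.Theory Num.Theory.
Import numFieldNormedType.Exports.
Local Open Scope classical_set_scope.
Local Open Scope ring_scope.
Local Open Scope complex_scope.

Section RealNorm.
Context {R : realType}.

Lemma ger0_ReE (e : R[i]) : 0 <= e -> e = (complex.Re e)%:C.
Proof. by move=> /ger0_real/RRe_real ->. Qed.

Lemma gtr0_ReE (e : R[i]) : 0 < e -> 0 < complex.Re e /\ e = (complex.Re e)%:C.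
Proof.
move=> e0; have eE := ger0_ReE (ltW e0); split => //.
by move: e0; rewrite {1}eE -(ltcR 0).
Qed.

Lemma Re_ge0 (e : R[i]) : 0 <= e -> 0 <= complex.Re e.
Proof. by move=> e0; rewrite -lecR -ger0_ReE. Qed.

Context {V : normedModType R[i]}.
Implicit Types x y z : V.

Definition rnorm x : R := complex.Re `|x|.

Lemma normcE x : `|x| = (rnorm x)%:C.
Proof. exact: ger0_ReE. Qed.

Lemma rnorm_ge0 x : 0 <= rnorm x.
Proof. exact/Re_ge0/normr_ge0. Qed.

Lemma ler_rnormD x y : rnorm (x + y) <= rnorm x + rnorm y.
Proof. by rewrite -lecR rmorphD /= -!normcE ler_normD. Qed.

Lemma rnormN x : rnorm (- x) = rnorm x.
Proof. by rewrite /rnorm normrN. Qed.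

Lemma rdistC x y : rnorm (x - y) = rnorm (y - x).
Proof. by rewrite /rnorm distrC. Qed.

Lemma rnorm0 : rnorm 0 = 0.
Proof. by rewrite /rnorm normr0. Qed.

Lemma rnorm0_eq0 x : rnorm x = 0 -> x = 0.
Proof. by move=> x0; apply/normr0_eq0; rewrite normcE x0. Qed.

Lemma rnormZ (c : R[i]) x : rnorm (c *: x) = complex.Re `|c| * rnorm x.
Proof. by rewrite {1}/rnorm normrZ (ger0_ReE (normr_ge0 c)) normcE -rmorphM. Qed.

Lemma rnormZ_ge0 (a : R) x : 0 <= a -> rnorm (a%:C *: x) = a * rnorm x.
Proof. by move=> a0; rewrite rnormZ ger0_norm ?lecR. Qed.

Lemma ler_rnormB x y : rnorm (x - y) <= rnorm x + rnorm y.
Proof. by rewrite -(rnormN y); apply: ler_rnormD. Qed.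

Lemma ler_rdistD x y z : rnorm (x - z) <= rnorm (x - y) + rnorm (y - z).
Proof. by rewrite -[x - z](subrKA y) ler_rnormD. Qed.

Lemma ler_rnorm_sum (I : Type) (s : seq I) (F : I -> V) :
  rnorm (\sum_(i <- s) F i) <= \sum_(i <- s) rnorm (F i).
Proof.
elim: s => [|a s IH]; first by rewrite !big_nil rnorm0.
by rewrite !big_cons; apply: le_trans (ler_rnormD _ _) (lerD _ IH).
Qed.

Lemma tends_to0_rnormP (f : nat -> V) :
  tends_to0 (fun m => `|f m|) <->
  (forall e : R, 0 < e -> exists N, forall m, (N <= m)%N -> rnorm (f m) < e).
Proof.
split => [f0 e e0|f0 e /gtr0_ReE[e0 ->]].
  by have [|N fN] := f0 e%:C; [rewrite ltcR | exists N => m /fN; rewrite normcE ltcR].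
by have [N fN] := f0 _ e0; exists N => m /fN; rewrite normcE ltcR.
Qed.

End RealNorm.

Lemma rel_bounded_rnorm (R : realType) (U V W : normedModType R[i])
    (A : op U V) (B : op U W) :
  rel_bounded (U := nsp_of U) (V := nsp_of V) (W := nsp_of W) A B ->
  exists a b : R, [/\ 0 <= a, 0 <= b & forall x, dom A x ->
    rnorm (app B x) <= a * rnorm x + b * rnorm (app A x)].
Proof.
move=> [_ [a [b [a0 [b0 AB]]]]]; exists (complex.Re a), (complex.Re b).
split; [exact: Re_ge0 | exact: Re_ge0 |] => x /AB /=.
by rewrite !normcE {1}(ger0_ReE a0) {1}(ger0_ReE b0) -!rmorphM -rmorphD lecR.
Qed.

Section Geometric.
Context {R : realType}.

Lemma geometric_lt (c e : R) : 0 < e -> exists N : nat, c / 2 ^+ N < e.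
Proof.
move=> e0; exists (Num.truncn (c / e)).+1.
have le_2X : ((Num.truncn (c / e)).+1%:R : R) <= 2 ^+ (Num.truncn (c / e)).+1.
  by rewrite -natrX ler_nat ltnW // ltn_expl.
have := lt_le_trans (truncnS_gt (c / e)) le_2X.
by rewrite ltr_pdivrMr // mulrC -ltr_pdivrMr ?exprn_gt0.
Qed.

Lemma tends_to0_geometric (V : normedModType R[i]) (f : nat -> V) (c : R) :
  (forall m, rnorm (f m) <= c / 2 ^+ m) -> tends_to0 (fun m => `|f m|).
Proof.
move=> fc; apply/tends_to0_rnormP => e /(geometric_lt c)[N cN].
have c0 : 0 <= c by have := fc 0%N; rewrite expr0 divr1; apply: le_trans (rnorm_ge0 _).
exists N => m Nm; apply: le_lt_trans (fc m) (le_lt_trans _ cN).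
by rewrite ler_wpM2l // lef_pV2 ?posrE ?exprn_gt0 // ler_eXn2l ?ltr1n.
Qed.

Lemma tends_to0_le (U V : normedModType R[i]) (f : nat -> V) (g : nat -> U) (K : R) :
  0 <= K -> (forall k, rnorm (f k) <= K * rnorm (g k)) ->
  tends_to0 (fun k => `|g k|) -> tends_to0 (fun k => `|f k|).
Proof.
move=> K0 fg /tends_to0_rnormP g0; apply/tends_to0_rnormP => e e0.
have K1 : 0 < K + 1 by rewrite ltr_wpDl.
have [N gN] := g0 _ (divr_gt0 e0 K1); exists N => k /gN.
rewrite ltr_pdivlMr // => ge; apply: le_lt_trans (fg k) (le_lt_trans _ ge).
by rewrite mulrC ler_wpM2l ?rnorm_ge0 ?lerDl.
Qed.

Lemma cvg_geometric_increments (V : completeNormedModType R[i]) (p : nat -> V)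
    (b : nat -> R) :
  (forall j, rnorm (p j.+1 - p j) <= b j) -> (forall j, b j.+1 <= b j / 2) ->
  exists z, forall m, rnorm (z - p m) <= 2 * b m.
Proof.
move=> pb b2.
have b0 j : 0 <= b j by apply: le_trans (rnorm_ge0 _) (pb j).
have p_shift m k : rnorm (p (m + k)%N - p m) <= 2 * b m - 2 * b (m + k)%N.
  elim: k => [|k IH]; first by rewrite addn0 subrr rnorm0 subrr.
  have := ler_rdistD (p (m + k.+1)%N) (p (m + k)%N) (p m).
  by have := pb (m + k)%N; have := b2 (m + k)%N; rewrite addnS; lra.
have b_shift m k : b (m + k)%N <= b m / 2 ^+ k.
  elim: k => [|k IH]; first by rewrite addn0 expr0 divr1.
  rewrite addnS exprS invfM mulrA; apply: le_trans (b2 _) _.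
  by rewrite ler_pdivrMr // mulrAC divfK ?expf_neq0 // ler_pM2r.
have p_cvg : cvg (p @ \oo).
  apply: cauchy_cvg; apply: cauchy_exP => eps /gtr0_ReE[e0 ->].
  have [N bN] := geometric_lt (2 * b 0%N) e0.
  exists (p N), N => // k /= Nk.
  rewrite -ball_normE /ball_ /= normcE ltcR rdistC.
  have := p_shift N (k - N)%N; rewrite subnKC //.
  by have := b_shift 0%N N; rewrite add0n; have := b0 k; lra.
exists (lim (p @ \oo)) => m; apply/ler_addgt0Pr => e e0.
have /cvgrPdist_le /(_ e%:C) := p_cvg; rewrite ltcR => /(_ e0) [N _ pN].
have := pN (m + N)%N (leq_addl _ _); rewrite normcE lecR.
have := ler_rdistD (lim (p @ \oo)) (p (m + N)%N) (p m).
by have := p_shift m N; have := b0 (m + N)%N; lra.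
Qed.

End Geometric.

Section Baire.
Context {R : realType} {U : completeNormedModType R[i]}.
Variable S : nat -> set U.

(* Each ball of the sequence is chosen inside the previous one and away from S k,
   so the limit of the centres lies in no S k. *)
Lemma nested_balls_avoid :
  (forall k (x0 : U) (r : R), 0 < r -> exists (y : U) (rho : R),
     [/\ rnorm (y - x0) < r, 0 < rho & forall s, S k s -> rho <= rnorm (y - s)]) ->
  exists z, forall k, ~ S k z.
Proof.
move=> avoid.
have pick q : exists yr : U * R, 0 < q.2 ->
    [/\ rnorm (yr.1 - q.1.2) < q.2, 0 < yr.2 &
        forall s, S q.1.1 s -> yr.2 <= rnorm (yr.1 - s)].
  case: q => -[k x0] r /=; have [r0|] := pselect (0 < r); last by exists (0, 0).
  by have [y [rho ?]] := avoid k x0 r r0; exists (y, rho).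
have [f f_avoid] := choice pick.
pose fix ball k : U * R :=
  if k is k'.+1 then
    let yr := f (k', (ball k').1, (ball k').2 / 4) in (yr.1, Num.min yr.2 ((ball k').2 / 4))
  else (0, 1).
have ball_step k : 0 < (ball k).2 -> [/\ 0 < (ball k.+1).2,
    (ball k.+1).2 <= (ball k).2 / 4, rnorm ((ball k.+1).1 - (ball k).1) <= (ball k).2 / 4 &
    forall s, S k s -> (ball k.+1).2 <= rnorm ((ball k.+1).1 - s)].
  move=> r0 /=; have r4 : 0 < (ball k).2 / 4 by rewrite divr_gt0.
  have [c_in rho0 rho_far] := f_avoid (k, (ball k).1, (ball k).2 / 4) r4.
  split; rewrite ?lt_min ?rho0 ?r4 ?ge_min ?lexx ?orbT ?(ltW c_in) // => s /rho_far.
  by apply: le_trans; rewrite ge_min lexx.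
have ball_pos k : 0 < (ball k).2 by elim: k => [|k /ball_step[]].
have ball_spec k := ball_step k (ball_pos k).
have quarter_half j : (ball j.+1).2 / 4 <= (ball j).2 / 4 / 2.
  by have [_ r4 _ _] := ball_spec j; have := ball_pos j; lra.
have incr j : rnorm ((ball j.+1).1 - (ball j).1) <= (ball j).2 / 4.
  by have [] := ball_spec j.
have [z zb] := cvg_geometric_increments incr quarter_half.
exists z => k Skz; have [_ _ _ /(_ z Skz) far] := ball_spec k.
by have := zb k.+1; have := ball_pos k.+1; rewrite rdistC; lra.
Qed.

Lemma baire_ball : (forall x, exists k, S k x) ->
  exists k (x0 : U) (r : R), 0 < r /\ forall x, rnorm (x - x0) < r ->
    forall eps : R, 0 < eps -> exists2 s, S k s & rnorm (x - s) < eps.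
Proof.
move=> cover; apply: contrapT => no_ball.
have [z zS] : exists z, forall k, ~ S k z.
  apply: nested_balls_avoid => k x0 r r0; apply: contrapT => no_y.
  apply: no_ball; exists k, x0, r; split => // x xr eps eps0.
  apply: contrapT => no_s; apply: no_y; exists x, eps; split => // s Ss.
  by rewrite leNgt; apply/negP => sx; apply: no_s; exists s.
by have [k] := cover z; apply: zS.
Qed.

End Baire.

Section ClosedGraph.
Context {R : realType} {U V : completeNormedModType R[i]}.
Variable G : U -> V.
Hypothesis G_linear : forall (c : R[i]) x y, G (c *: x + y) = c *: G x + G y.
Hypothesis G_closed : closed_op (U := nsp_of U) (V := nsp_of V) (Op setT G).

Let G0 : G 0 = 0.
Proof. by have := G_linear (-1) 0 0; rewrite scaler0 addr0 scaleN1r addNr. Qed.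

Let GZ c x : G (c *: x) = c *: G x.
Proof. by rewrite -[c *: x]addr0 G_linear G0 addr0. Qed.

Let GB x y : G (x - y) = G x - G y.
Proof. by rewrite -scaleN1r [x + _]addrC G_linear scaleN1r addrC. Qed.

(* A point of the ball around 0 is a difference of two points of the ball around x0. *)
Lemma approx_ball : exists K r : R, [/\ 0 <= K, 0 < r &
  forall (t : R) y, 0 < t -> rnorm y < t * r -> forall eps : R, 0 < eps ->
    exists2 s, rnorm (G s) <= K * t & rnorm (y - s) < eps].
Proof.
have cover x : exists k, rnorm (G x) <= k%:R.
  by exists (Num.truncn (rnorm (G x))).+1; apply/ltW/truncnS_gt.
have [k [x0 [r [r0 near_x0]]]] := baire_ball cover.
exists (2 * k%:R), r; split => // t y t0 yr eps eps0.
have t_ge0 : 0 <= t^-1 by rewrite invr_ge0 ltW.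
have y'r : rnorm (x0 + t^-1%:C *: y - x0) < r.
  by rewrite addrC addKr rnormZ_ge0 // mulrC ltr_pdivrMr // mulrC.
have x0r : rnorm (x0 - x0) < r by rewrite subrr rnorm0.
have e0 : 0 < eps / t / 2 by rewrite !divr_gt0.
have [s1 Gs1 ys1] := near_x0 _ y'r _ e0.
have [s2 Gs2 ys2] := near_x0 _ x0r _ e0.
exists (t%:C *: (s1 - s2)).
  rewrite GZ rnormZ_ge0 ?(ltW t0) // GB.
  by have := ler_rnormB (G s1) (G s2); nra.
have -> : y - t%:C *: (s1 - s2) =
    t%:C *: ((x0 + t^-1%:C *: y - s1) - (x0 - s2)).
  rewrite !scalerBr !scalerDr scalerA -rmorphM mulfV ?gt_eqF // scale1r.
  by rewrite !opprB [RHS]addrC -[_ + y - _]addrA subrKA addrCA.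
rewrite rnormZ_ge0 ?(ltW t0) // mulrC -ltr_pdivlMr //.
by have := ler_rnormB (x0 + t^-1%:C *: y - s1) (x0 - s2); lra.
Qed.

(* Iterating the approximation at scales 2^-j writes y as a series whose
   images converge; closedness identifies the limit with G y. *)
Lemma bounded_of_approx (K r : R) : 0 < r ->
  (forall (t : R) y, 0 < t -> rnorm y < t * r -> forall eps : R, 0 < eps ->
    exists2 s, rnorm (G s) <= K * t & rnorm (y - s) < eps) ->
  forall y, rnorm y < r -> rnorm (G y) <= 2 * K.
Proof.
move=> r0 approx y yr.
have step (q : nat * U) : exists d : U, rnorm q.2 < r / 2 ^+ q.1 ->
    rnorm (G d) <= K / 2 ^+ q.1 /\ rnorm (q.2 - d) < r / 2 ^+ q.1.+1.
  case: q => j e /=; have [er|] := pselect (rnorm e < r / 2 ^+ j); last by exists 0.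
  have t0 : 0 < (2 ^+ j)^-1 :> R by rewrite invr_gt0 exprn_gt0.
  have e0 : 0 < r / 2 ^+ j.+1 by rewrite divr_gt0 ?exprn_gt0.
  have [|s] := approx _ e t0 _ _ e0; first by rewrite mulrC.
  by exists s; rewrite mulrC.
have [d d_spec] := choice step.
pose fix e j : U := if j is j'.+1 then e j' - d (j', e j') else y.
have e_small j : rnorm (e j) < r / 2 ^+ j.
  elim: j => [|j IH]; first by rewrite expr0 divr1.
  by have [_ ] := d_spec (j, e j) IH.
have incr j : rnorm (G (y - e j.+1) - G (y - e j)) <= K / 2 ^+ j.
  rewrite -GB /= opprB (addrC y) addrKA opprK subrK.
  by have [] := d_spec (j, e j) (e_small j).
have half j : K / 2 ^+ j.+1 <= K / 2 ^+ j / 2 by rewrite exprSr invfM mulrA.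
have [w w_lim] := cvg_geometric_increments incr half.
have e_lim : tends_to0 (fun m => `|y - e m - y|).
  apply: (tends_to0_geometric (c := r)) => m.
  by rewrite addrAC subrr add0r rnormN ltW.
have Ge_lim : tends_to0 (fun m => `|G (y - e m) - w|).
  apply: (tends_to0_geometric (c := 2 * K)) => m.
  by rewrite rdistC -mulrA; apply: w_lim.
have [_ Gy] := G_closed (fun=> I) e_lim Ge_lim.
by have := w_lim 0%N; rewrite /= subrr G0 subr0 -Gy expr0 divr1.
Qed.

Lemma linear_bound_of_ball (M r : R) : 0 < r ->
  (forall y, rnorm y < r -> rnorm (G y) <= M) ->
  forall x, rnorm (G x) <= 2 * M / r * rnorm x.
Proof.
move=> r0 ball_M x; case: (eqVneq (rnorm x) 0) => [/rnorm0_eq0 ->|x0].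
  by rewrite G0 !rnorm0 mulr0.
have xp : 0 < rnorm x by rewrite lt_neqAle eq_sym x0 rnorm_ge0.
have t0 : 0 <= r / (2 * rnorm x) by rewrite divr_ge0 ?mulr_ge0 ?ltW.
have tx : rnorm ((r / (2 * rnorm x))%:C *: x) < r.
  rewrite rnormZ_ge0 //; have -> : r / (2 * rnorm x) * rnorm x = r / 2.
    by field; rewrite gt_eqF.
  lra.
have := ler_wpM2l (ltW (mulr_gt0 (ltr0n _ 2) xp)) (ball_M _ tx).
have -> : 2 * rnorm x * rnorm (G ((r / (2 * rnorm x))%:C *: x)) = r * rnorm (G x).
  by rewrite GZ rnormZ_ge0 //; field; rewrite gt_eqF.
by move=> le_rg; rewrite [leRHS]mulrAC ler_pdivlMr //; lra.
Qed.

Theorem closed_graph : exists c : R, 0 <= c /\ forall x, rnorm (G x) <= c * rnorm x.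
Proof.
have [K [r [K0 r0 approx]]] := approx_ball.
exists (2 * (2 * K) / r); split; first by rewrite divr_ge0 ?mulr_ge0 // ltW.
exact: linear_bound_of_ball r0 (bounded_of_approx r0 approx).
Qed.

End ClosedGraph.

Lemma lin_op_app0 (R : realType) (U W : normedModType R[i]) (B : op U W) :
  lin_op B -> app B 0 = 0.
Proof.
case=> B0 [_ [_ B_lin]]; have := B_lin (-1) 0 0 B0 B0.
by rewrite scaler0 add0r scaleN1r addNr.
Qed.

Section Blocks.
Variables (R : realType) (m : nat) (X : nat -> completeNormedModType R[i]).
Local Notation blkX := (blk (fun j : nat => (X j : normedModType R[i])) m).

Definition blk_inj (i0 : 'I_m) (x : X i0) : blkX :=
  fun i => match PeanoNat.Nat.eq_dec i0 i with
           | left e => eq_rect (nat_of_ord i0) (fun k => X k) x (nat_of_ord i) e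
           | right _ => 0 end.

Lemma blk_injE (y : blkX) (i0 : 'I_m) :
  blk_inj (y i0) = fun i => if i == i0 then y i else 0.
Proof.
apply: functional_extensionality_dep => i; rewrite /blk_inj.
case: PeanoNat.Nat.eq_dec => [e|ne].
  have ii : i0 = i by apply: ord_inj.
  by subst i; rewrite eqxx (Eqdep_dec.UIP_refl_nat _ e).
by case: eqP => // ii; subst i; case: ne.
Qed.

Lemma blk_inj_linear (i0 : 'I_m) (c : R[i]) (x x' : X i0) :
  blk_inj (c *: x + x') = fun i => c *: blk_inj x i + blk_inj x' i.
Proof.
apply: functional_extensionality_dep => i; rewrite /blk_inj.
case: PeanoNat.Nat.eq_dec => [e|ne]; last by rewrite scaler0 addr0.
by move: (nat_of_ord i) e => k e; case: k / e.
Qed.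

Definition bnorm (y : blkX) : R := \sum_(i < m) rnorm (y i).

Lemma nnorm_blkE (y : blkX) : nnorm y = (bnorm y)%:C.
Proof. by rewrite /= /bnorm rmorph_sum; apply: eq_bigr => i _; rewrite normcE. Qed.

Lemma bnorm_ge0 (y : blkX) : 0 <= bnorm y.
Proof. by apply: sumr_ge0 => i _; apply: rnorm_ge0. Qed.

Lemma ler_rnorm_bnorm (y : blkX) (j : 'I_m) : rnorm (y j) <= bnorm y.
Proof. by rewrite /bnorm (bigD1 j) //= lerDl sumr_ge0 // => i _; apply: rnorm_ge0. Qed.

Lemma bnorm_inj (i0 : 'I_m) (x : X i0) : bnorm (blk_inj x) = rnorm x.
Proof.
rewrite /bnorm (bigD1 i0) //= big1 ?addr0 => [|i ne]; rewrite /blk_inj.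
  by case: PeanoNat.Nat.eq_dec => // e; rewrite (Eqdep_dec.UIP_refl_nat _ e).
case: PeanoNat.Nat.eq_dec => [e|_]; last exact: rnorm0.
by case/eqP: ne; apply: ord_inj.
Qed.

Definition blk_restr (s : seq 'I_m) (y : blkX) : blkX :=
  fun i => if i \in s then y i else 0.

Lemma blk_restr_enum (y : blkX) : blk_restr (index_enum 'I_m) y = y.
Proof. by apply: functional_extensionality_dep => i; rewrite /blk_restr mem_index_enum. Qed.

End Blocks.

Section Resolvent.
Variables (R : realType) (m : nat) (X : nat -> completeNormedModType R[i]).
Variables (Y : completeNormedModType R[i]) (A : forall i j : nat, op (X j) (X i)).
Variable T : forall j : nat, op (X j) Y.
Local Notation blkX := (blk (fun j : nat => (X j : normedModType R[i])) m).

Hypothesis A_lin : forall i j, (i < m)%N -> (j < m)%N -> lin_op (A i j).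
Hypothesis A_closed : forall i, (i < m)%N ->
  closed_op (U := nsp_of (X i)) (V := nsp_of (X i)) (A i i).
Hypothesis A_dom : forall i j, (i < m)%N -> (j < m)%N -> dom (A j j) `<=` dom (A i j).
Hypothesis T_rel : forall j, (j < m)%N ->
  rel_bounded (U := nsp_of (X j)) (V := nsp_of (X j)) (W := nsp_of Y) (A j j) (T j).

Variables (l : R[i]) (Rv : blkX -> blkX).
Hypothesis Rv_inv : is_bdd_inverse (blockop A m) l Rv.

Lemma appA_linear (i j : 'I_m) (c : R[i]) u v : dom (A j j) u -> dom (A j j) v ->
  app (A i j) (c *: u + v) = c *: app (A i j) u + app (A i j) v.
Proof.
move=> u_dom v_dom; have [_ [_ [_ Aij_lin]]] := A_lin (ltn_ord i) (ltn_ord j).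
by apply: Aij_lin; apply: A_dom.
Qed.

Lemma resolvent_dom y (j : 'I_m) : dom (A j j) (Rv y j).
Proof. by case: Rv_inv => inv _; apply: (inv y).1. Qed.

Lemma resolvent_linear (c : R[i]) (y1 y2 : blkX) :
  Rv (fun i => c *: y1 i + y2 i) = fun i => c *: Rv y1 i + Rv y2 i.
Proof.
case: Rv_inv => inv [inv_left _].
set z : blkX := fun i => c *: Rv y1 i + Rv y2 i.
have z_dom : dom (blockop A m) z.
  move=> i; have [_ [domD [domZ _]]] := A_lin (ltn_ord i) (ltn_ord i).
  by apply: domD; [apply: domZ |]; apply: resolvent_dom.
rewrite -(inv_left z z_dom); congr Rv; apply: functional_extensionality_dep => i /=.
have y1E := f_equal (fun f => f i) (inv y1).2.
have y2E := f_equal (fun f => f i) (inv y2).2.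
have scale_comb (V : lmodType R[i]) (r1 r2 s1 s2 : V) :
    l *: (c *: r1 + r2) - (c *: s1 + s2) = c *: (l *: r1 - s1) + (l *: r2 - s2).
  by rewrite scalerDr scalerBr !scalerA mulrC opprD addrACA.
rewrite /= in y1E y2E; rewrite -y1E -y2E /z -scale_comb; congr (_ - _).
rewrite scaler_sumr -big_split /=.
by apply: eq_bigr => j _; rewrite appA_linear //; apply: resolvent_dom.
Qed.

Lemma resolvent0 : Rv (fun=> 0) = fun=> 0.
Proof.
have := resolvent_linear (-1) (fun=> 0) (fun=> 0).
have -> : (fun i : 'I_m => (-1) *: (0 : X i) + 0) = (fun=> 0).
  by apply: functional_extensionality_dep => i; rewrite scaler0 addr0.
move=> ->; apply: functional_extensionality_dep => i.
by rewrite scaleN1r addNr.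
Qed.

Lemma resolvent_bounded : exists cR : R, 0 <= cR /\ forall y, bnorm (Rv y) <= cR * bnorm y.
Proof.
case: Rv_inv => _ [_ [c Rv_c]]; exists (Num.max (complex.Re c) 0).
split=> [|y]; first by rewrite le_max lexx orbT.
have := Rv_c y; rewrite !nnorm_blkE; case: c {Rv_c} => a b.
rewrite lecE /= => /andP[_]; rewrite mulr0 subr0 => Rv_a; apply: le_trans Rv_a _.
by rewrite ler_wpM2r ?bnorm_ge0 // le_max lexx.
Qed.

Definition diag_resolvent (i0 j : 'I_m) (x : X i0) : X j :=
  app (A j j) (Rv (blk_inj x) j).
Arguments diag_resolvent : clear implicits.

Lemma diag_resolvent_linear i0 j (c : R[i]) x x' :
  diag_resolvent i0 j (c *: x + x') = c *: diag_resolvent i0 j x + diag_resolvent i0 j x'.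
Proof.
by rewrite /diag_resolvent blk_inj_linear resolvent_linear appA_linear //; apply: resolvent_dom.
Qed.

Lemma diag_resolvent_closed (i0 j : 'I_m) :
  closed_op (U := nsp_of (X i0)) (V := nsp_of (X j)) (Op setT (diag_resolvent i0 j)).
Proof.
move=> u x w _ ux uw; split=> //.
have [cR [cR0 Rv_cR]] := resolvent_bounded.
have Ru_lim : tends_to0 (fun k => `|Rv (blk_inj (u k)) j - Rv (blk_inj x) j|).
  apply: (tends_to0_le cR0 _ ux) => k.
  have -> : Rv (blk_inj (u k)) j - Rv (blk_inj x) j = Rv (blk_inj (-1 *: x + u k)) j.
    by rewrite blk_inj_linear resolvent_linear scaleN1r addrC.
  apply: le_trans (ler_rnorm_bnorm _ j) (le_trans (Rv_cR _) _).
  by rewrite bnorm_inj scaleN1r addrC.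
by have [] := A_closed (ltn_ord j) (fun k => resolvent_dom _ j) Ru_lim uw.
Qed.

Lemma diag_resolvent_bounded : exists C : R, 0 <= C /\
  forall i0 j x, rnorm (diag_resolvent i0 j x) <= C * rnorm x.
Proof.
have entry_bounded (p : 'I_m * 'I_m) : exists c : R, 0 <= c /\
    forall x, rnorm (diag_resolvent p.1 p.2 x) <= c * rnorm x.
  exact: closed_graph (@diag_resolvent_linear p.1 p.2) (@diag_resolvent_closed p.1 p.2).
have [c c_spec] := choice entry_bounded.
exists (\sum_p c p); split=> [|i0 j x]; first by apply: sumr_ge0 => p _; case: (c_spec p).
apply: le_trans ((c_spec (i0, j)).2 x) _; rewrite ler_wpM2r ?rnorm_ge0 //.
by rewrite (bigD1 (i0, j)) //= lerDl sumr_ge0 // => p _; case: (c_spec p).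
Qed.

Lemma diag_resolvent_restr (j : 'I_m) s y : uniq s ->
  app (A j j) (Rv (blk_restr s y) j) = \sum_(i <- s) diag_resolvent i j (y i).
Proof.
elim: s => [|a s IH] /=.
  have -> : blk_restr [::] y = fun=> 0 by apply: functional_extensionality_dep.
  by rewrite resolvent0 big_nil lin_op_app0 //; apply: A_lin.
move=> /andP[a_notin s_uniq].
have -> : blk_restr (a :: s) y = fun i => 1 *: blk_inj (y a) i + blk_restr s y i.
  apply: functional_extensionality_dep => i; rewrite blk_injE scale1r /blk_restr in_cons.
  by case: (eqVneq i a) => [->|] /=; rewrite ?(negbTE a_notin) ?addr0 ?add0r.
rewrite resolvent_linear big_cons -IH // appA_linear ?scale1r //; apply: resolvent_dom.
Qed.

Lemma diag_app_resolvent_bounded : exists C : R, 0 <= C /\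
  forall y (j : 'I_m), rnorm (app (A j j) (Rv y j)) <= C * bnorm y.
Proof.
have [C [C0 C_spec]] := diag_resolvent_bounded; exists C; split=> // y j.
rewrite -{1}(blk_restr_enum y) diag_resolvent_restr ?index_enum_uniq //.
apply: le_trans (ler_rnorm_sum _ _) _; rewrite /bnorm mulr_sumr.
by apply: ler_sum => i _; apply: C_spec.
Qed.

Lemma rowop_entries_rel_bounded : exists a b : 'I_m -> R, forall j,
  [/\ 0 <= a j, 0 <= b j & forall x, dom (A j j) x ->
    rnorm (app (T j) x) <= a j * rnorm x + b j * rnorm (app (A j j) x)].
Proof.
have entry (j : 'I_m) : exists ab : R * R, [/\ 0 <= ab.1, 0 <= ab.2 &
    forall x, dom (A j j) x ->
      rnorm (app (T j) x) <= ab.1 * rnorm x + ab.2 * rnorm (app (A j j) x)].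
  by have [a [b ?]] := rel_bounded_rnorm (T_rel (ltn_ord j)); exists (a, b).
by have [ab ab_spec] := choice entry; exists (fun j => (ab j).1), (fun j => (ab j).2).
Qed.

Lemma rowop_resolvent_bounded : exists K : R, 0 <= K /\
  forall y, rnorm (app (rowop T m) (Rv y)) <= K * bnorm y.
Proof.
have [cR [cR0 Rv_cR]] := resolvent_bounded.
have [C [C0 ARv_C]] := diag_app_resolvent_bounded.
have [a [b ab]] := rowop_entries_rel_bounded.
exists (\sum_j (a j * cR + b j * C)); split=> [|y].
  by apply: sumr_ge0 => j _; have [a0 b0 _] := ab j; rewrite addr_ge0 ?mulr_ge0.
rewrite mulr_suml; apply: le_trans (ler_rnorm_sum _ _) (ler_sum _ _) => j _.
have [a0 b0 Tj] := ab j; apply: le_trans (Tj _ (resolvent_dom y j)) _.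
rewrite mulrDl -!mulrA lerD ?ler_wpM2l //.
exact: le_trans (ler_rnorm_bnorm _ j) (Rv_cR y).
Qed.

Lemma blockop_dom_rowop : dom (blockop A m) `<=` dom (rowop T m).
Proof. by move=> x x_dom j; apply: (T_rel (ltn_ord j)).1 _ (x_dom j). Qed.

Lemma rel_bounded_of_bnorm (a b : R) : 0 <= a -> 0 <= b ->
  (forall x, dom (blockop A m) x ->
    rnorm (app (rowop T m) x) <= a * bnorm x + b * bnorm (app (blockop A m) x)) ->
  rel_bounded (blockop A m) (rowop T m).
Proof.
move=> a0 b0 Tab; split; first exact: blockop_dom_rowop.
exists a%:C, b%:C; do 2!(split; first by rewrite lecR); move=> x /Tab.
by rewrite !nnorm_blkE /= normcE -!rmorphM -rmorphD lecR.
Qed.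

(* T x = T Res(l) (l - A_m) x. *)
Lemma rowop_rel_bounded_of_resolvent : rel_bounded (blockop A m) (rowop T m).
Proof.
have [K [K0 TK]] := rowop_resolvent_bounded.
apply: (@rel_bounded_of_bnorm (K * complex.Re `|l|) K) => //.
  by rewrite mulr_ge0 ?Re_ge0.
move=> x x_dom; case: Rv_inv => _ [inv_left _]; rewrite -{1}(inv_left x x_dom).
apply: le_trans (TK _) _; rewrite -mulrA -mulrDr ler_wpM2l // /bnorm mulr_sumr.
rewrite -big_split /=; apply: ler_sum => i _.
by apply: le_trans (ler_rnormB _ _) _; rewrite rnormZ.
Qed.

Lemma rowop_rel_bounded_le1 : (m <= 1)%N -> rel_bounded (blockop A m) (rowop T m).
Proof.
move=> m_le1; have [a [b ab]] := rowop_entries_rel_bounded.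
have ord_eq (k j : 'I_m) : k = j.
  have ord0 (i : 'I_m) : nat_of_ord i = 0%N.
    by apply/eqP; rewrite -leqn0 -ltnS (leq_trans (ltn_ord i)).
  by apply: ord_inj; rewrite !ord0.
have blockop_diag x (j : 'I_m) : app (blockop A m) x j = app (A j j) (x j).
  by rewrite /= (bigD1 j) //= big1 ?addr0 // => k; rewrite (ord_eq k j) eqxx.
apply: (@rel_bounded_of_bnorm (\sum_j a j) (\sum_j b j)).
- by apply: sumr_ge0 => j _; have [] := ab j.
- by apply: sumr_ge0 => j _; have [] := ab j.
move=> x x_dom; rewrite !mulr_suml -big_split /=.
apply: le_trans (ler_rnorm_sum _ _) (ler_sum _ _) => j _.
have [a0 b0 Tj] := ab j; apply: le_trans (Tj _ (x_dom j)) (lerD _ _).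
  exact/ler_wpM2l/ler_rnorm_bnorm.
by rewrite ler_wpM2l // -blockop_diag ler_rnorm_bnorm.
Qed.

End Resolvent.

(* 0-based indexing: the paper's X_1,...,X_n are X 0,...,X (n-1); the paper's
   A_{ij} is A (i-1) (j-1); the paper's block A_k is blockop A k. *)
Theorem lemma3p5 (R : realType) (n : nat) (hn : (2 <= n)%N)
  (X : nat -> completeNormedModType R[i])
  (A : forall i j : nat, op (X j) (X i))
  (T : forall j : nat, op (X j) (X n.-1))
  (hAlin : forall i j : nat, (i < n)%N -> (j < n)%N -> lin_op (A i j))
  (hAclosed : forall i : nat, (i < n)%N ->
      closed_op (U := nsp_of (X i)) (V := nsp_of (X i)) (A i i))
  (hArel : forall i j : nat, (i < n)%N -> (j < n)%N -> i <> j ->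
      rel_bounded (U := nsp_of (X j)) (V := nsp_of (X j)) (W := nsp_of (X i))
        (A j j) (A i j))
  (hTlin : forall j : nat, (j < n.-1)%N -> lin_op (T j))
  (hTrel : forall j : nat, (j < n.-1)%N ->
      rel_bounded (U := nsp_of (X j)) (V := nsp_of (X j)) (W := nsp_of (X n.-1))
        (A j j) (T j))
  (hblkclosed : forall k : nat, (2 <= k <= n)%N -> closed_op (blockop A k)) :
  ((forall k : nat, (2 <= k <= n.-2)%N ->
      spectrum (U := nsp_of (X k.-1)) (A k.-1 k.-1) `|` spectrum (blockop A k)
        <> [set: R[i]]) ->
   forall l : R[i],
     ~ (spectrum (U := nsp_of (X n.-2)) (A n.-2 n.-2) l \/
        spectrum (blockop A n.-1) l) ->
     forall Rv : blk (fun j : nat => (X j : normedModType R[i])) n.-1 -> blk (fun j : nat => (X j : normedModType R[i])) n.-1,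
       is_bdd_inverse (blockop A n.-1) l Rv ->
       exists c : R[i], forall y : blk (fun j : nat => (X j : normedModType R[i])) n.-1,
         nnorm (app (rowop T n.-1) (Rv y)) <= c * nnorm y)
  /\
  ((forall k : nat, (2 <= k <= n.-1)%N ->
      spectrum (U := nsp_of (X k.-1)) (A k.-1 k.-1) `|` spectrum (blockop A k)
        <> [set: R[i]]) ->
   rel_bounded (blockop A n.-1) (rowop T n.-1)).
Proof.
have lt_n i : (i < n.-1)%N -> (i < n)%N by move=> /leq_trans; apply; apply: leq_pred.
have A_lin i j : (i < n.-1)%N -> (j < n.-1)%N -> lin_op (A i j).
  by move=> /lt_n i_lt /lt_n j_lt; apply: hAlin.
have A_closed i : (i < n.-1)%N ->
    closed_op (U := nsp_of (X i)) (V := nsp_of (X i)) (A i i).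
  by move=> /lt_n; apply: hAclosed.
have A_dom i j : (i < n.-1)%N -> (j < n.-1)%N -> dom (A j j) `<=` dom (A i j).
  move=> /lt_n i_lt /lt_n j_lt; have [-> //|/eqP i_neq_j] := eqVneq i j.
  by have [] := hArel i j i_lt j_lt i_neq_j.
split=> [_ l _ Rv Rv_inv | spec].
  have [K [_ TK]] := rowop_resolvent_bounded A_lin A_closed A_dom hTrel Rv_inv.
  by exists K%:C => y; rewrite nnorm_blkE /= normcE -rmorphM lecR; apply: TK.
have [le1|gt1] := leqP n.-1 1; first exact: rowop_rel_bounded_le1.
have [mu [Rv Rv_inv]] : exists mu, in_resolvent (blockop A n.-1) mu.
  apply: contrapT => no_mu; apply: (spec n.-1); first by rewrite gt1 leqnn.
  by apply/seteqP; split=> // z _; right=> z_res; apply: no_mu; exists z.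
exact (rowop_rel_bounded_of_resolvent A_lin A_closed A_dom hTrel Rv_inv).
Qed.
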